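(* Let $\mathcal{S}=\{s_1,\dots,s_N\}$ be a finite state space, $\mathcal{A}$ a finite action space, $\gamma\in(0,1)$, and consider the real MDP $\langle\mathcal{S},\mathcal{A},\mathbb{P},R,\gamma\rangle$ and the DT MDP $\langle\mathcal{S},\mathcal{A},\mathbb{P}',R',\gamma\rangle$. Let $R_{\max}=\max_{i,j,a}|R(s_i,a)-R'(s_j,a)|$, let $d_0:\mathcal{S}\times\mathcal{S}\to[0,\frac{R_{\max}}{1-\gamma}]$ be the constant zero function, and for $n\ge1$ define $$d_n(s_i,s_j)=\max_a\Big\{|R(s_i,a)-R'(s_j,a)|+\gamma W_1\big(\mathbb{P}(\cdot|s_i,a),\mathbb{P}'(\cdot|s_j,a);d_{n-1}\big)\Big\}.$$ Then $d_n$ converges uniformly, as $n\to\infty$, to a map $\bar d:\mathcal{S}\times\mathcal{S}\to[0,\frac{R_{\max}}{1-\gamma}]$ which is a fixed point of the recursion, i.e. $\bar d(s_i,s_j)=\max_a\{|R(s_i,a)-R'(s_j,a)|+\gamma W_1(\mathbb{P}(\cdot|s_i,a),\mathbb{P}'(\cdot|s_j,a);\bar d)\}$ for all $i,j$, and for all $n$ and all $i,j$, $$\bar d(s_i,s_j)-d_n(s_i,s_j)\le\frac{\gamma^nR_{\max}}{1-\gamma}.$$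
   Context: $\mathbb{P}(\cdot|s,a),\mathbb{P}'(\cdot|s,a)$ are probability distributions on $\mathcal{S}$; $R,R':\mathcal{S}\times\mathcal{A}\to\mathbb{R}$. For probability distributions $P,Q$ on $\mathcal{S}$ and a cost $d:\mathcal{S}\times\mathcal{S}\to[0,\infty)$ (not required to vanish on the diagonal; first argument a state of the real MDP, second a state of the DT MDP), $W_1(P,Q;d)=\min_{\Lambda}\sum_{i,j}\lambda_{i,j}d(s_i,s_j)$, over nonnegative $N\times N$ matrices $\Lambda=(\lambda_{i,j})$ with row sums $\sum_j\lambda_{i,j}=P(s_i)$ and column sums $\sum_i\lambda_{i,j}=Q(s_j)$. *)

From HB Require Import structures.
From mathcomp Require Import all_boot all_order all_algebra.
From mathcomp Require Import boolp classical_sets reals.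
Set Implicit Arguments. Unset Strict Implicit. Unset Printing Implicit Defensive.
Import Order.TTheory GRing.Theory Num.Theory.
Local Open Scope ring_scope.
Local Open Scope classical_set_scope.

Section Defs.
Variables (R : realType) (N : nat) (A : finType).

Definition is_distr (P : 'I_N -> R) : Prop :=
  (forall i, 0 <= P i) /\ \sum_(i < N) P i = 1.

(* couplings Lambda of P and Q (first index: real MDP state, second: DT state) *)
Definition coupling (P Q : 'I_N -> R) (L : 'I_N -> 'I_N -> R) : Prop :=
  [/\ forall i j, 0 <= L i j,
      forall i, \sum_(j < N) L i j = P i &
      forall j, \sum_(i < N) L i j = Q j].

(* W_1(P,Q;d) = min over couplings of the transport cost (taken as the infimum
   of the set of attainable costs; the minimum is attained) *)
Definition W1 (P Q : 'I_N -> R) (d : 'I_N -> 'I_N -> R) : R :=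
  inf [set c | exists L, coupling P Q L /\
                 c = \sum_(i < N) \sum_(j < N) L i j * d i j].

Definition bisim_step (P P' : 'I_N -> A -> 'I_N -> R) (Rw Rw' : 'I_N -> A -> R)
  (gamma : R) (d : 'I_N -> 'I_N -> R) : 'I_N -> 'I_N -> R :=
  fun i j => \big[Num.max/0]_(a : A)
     (`|Rw i a - Rw' j a| + gamma * W1 (P i a) (P' j a) d).

Fixpoint dseq (P P' : 'I_N -> A -> 'I_N -> R) (Rw Rw' : 'I_N -> A -> R)
  (gamma : R) (n : nat) : 'I_N -> 'I_N -> R :=
  match n with
  | 0%N => fun _ _ => 0
  | n'.+1 => bisim_step P P' Rw Rw' gamma (dseq P P' Rw Rw' gamma n')
  end.

Definition Rmax (Rw Rw' : 'I_N -> A -> R) : R :=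
  \big[Num.max/0]_(i < N) \big[Num.max/0]_(j < N) \big[Num.max/0]_(a : A)
     `|Rw i a - Rw' j a|.

End Defs.

(* The recursion operator T is monotone and an order-theoretic gamma-contraction:
   d <= d' + e implies T d <= T d' + gamma e, because W1 is an infimum of transport
   costs against couplings of total mass 1.  Hence d_n = T^n 0 is nondecreasing and
   bounded by K = R_max/(1-gamma) (T maps [0, K] into [0, R_max + gamma K] = [0, K]),
   and d_(n+k) = T^n d_k <= T^n 0 + gamma^n K.  The pointwise supremum of the d_n is
   thus within gamma^n K of every d_n, and passing to the limit in d_(n+1) = T d_n
   makes it a fixed point of T. *)

From mathcomp Require Import all_boot all_order all_algebra.
From mathcomp Require Import classical_sets reals.
From mathcomp Require Import topology normedtype sequences.
From mathcomp Require Import ring.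
Import Order.TTheory GRing.Theory Num.Theory numFieldNormedType.Exports.
Set Implicit Arguments.
Unset Strict Implicit.
Unset Printing Implicit Defensive.
Local Open Scope ring_scope.
Local Open Scope classical_set_scope.

Section Wasserstein.
Variables (R : realType) (N : nat) (P Q : 'I_N -> R).
Hypotheses (P_distr : is_distr P) (Q_distr : is_distr Q).

Definition transport_cost (L d : 'I_N -> 'I_N -> R) : R :=
  \sum_(i < N) \sum_(j < N) L i j * d i j.

Definition coupling_costs (d : 'I_N -> 'I_N -> R) : set R :=
  [set c | exists L, coupling P Q L /\ c = transport_cost L d].

Lemma coupling_prod : coupling P Q (fun i j => P i * Q j).
Proof.
case: P_distr Q_distr => [P0 P1] [Q0 Q1]; split.
- by move=> i j; rewrite mulr_ge0.
- by move=> i; rewrite -mulr_sumr Q1 mulr1.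
- by move=> j; rewrite -mulr_suml P1 mul1r.
Qed.

Lemma coupling_mass {L} : coupling P Q L -> \sum_(i < N) \sum_(j < N) L i j = 1.
Proof. by case=> _ rowL _; rewrite -P_distr.2; apply: eq_bigr => i _; exact: rowL. Qed.

Lemma transport_cost_le {L} d d' : coupling P Q L ->
  (forall i j, d i j <= d' i j) -> transport_cost L d <= transport_cost L d'.
Proof.
case=> L0 _ _ dd'; apply: ler_sum => i _; apply: ler_sum => j _.
exact: ler_wpM2l.
Qed.

Lemma transport_costD L d d' :
  transport_cost L (fun i j => d i j + d' i j) =
  transport_cost L d + transport_cost L d'.
Proof.
rewrite /transport_cost -big_split; apply: eq_bigr => i _.
by rewrite -big_split; apply: eq_bigr => j _; rewrite mulrDr.
Qed.

Lemma transport_cost_cst {L} c : coupling P Q L ->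
  transport_cost L (fun _ _ => c) = c.
Proof.
move=> cL; rewrite -[RHS]mul1r -(coupling_mass cL) mulr_suml.
by apply: eq_bigr => i _; rewrite mulr_suml.
Qed.

Lemma coupling_costs_neq0 d : coupling_costs d !=set0.
Proof.
have cL := coupling_prod.
by exists (transport_cost (fun i j => P i * Q j) d), (fun i j => P i * Q j).
Qed.

Lemma coupling_costs_lbound d : has_lbound (coupling_costs d).
Proof.
pose m := \big[Num.min/0]_(ij : 'I_N * 'I_N) d ij.1 ij.2.
exists m => _ [L [cL ->]]; rewrite -(transport_cost_cst m cL).
by apply: transport_cost_le => // i j; exact: (bigmin_le _ (i, j)).
Qed.

Lemma W1_le_cost {L} d : coupling P Q L -> W1 P Q d <= transport_cost L d.
Proof. by move=> cL; apply: ge_inf; [exact: coupling_costs_lbound | exists L]. Qed.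

Lemma W1_le_cst d c : (forall i j, d i j <= c) -> W1 P Q d <= c.
Proof.
move=> dc; have cL := coupling_prod.
apply: (le_trans (W1_le_cost d cL)).
by rewrite -[leRHS](transport_cost_cst c cL); exact: transport_cost_le.
Qed.

Lemma W1_le_shift d d' e :
  (forall i j, d i j <= d' i j + e) -> W1 P Q d <= W1 P Q d' + e.
Proof.
move=> dd'; rewrite -lerBlDr; apply: lb_le_inf; first exact: coupling_costs_neq0.
move=> _ [L [cL ->]]; rewrite lerBlDr -[X in _ + X](transport_cost_cst e cL).
rewrite -transport_costD; apply: le_trans (W1_le_cost d cL) _.
exact: transport_cost_le.
Qed.

End Wasserstein.

Lemma geometric_tail_lt {R : realType} (q K e : R) : 0 <= q -> q < 1 -> 0 < e ->
  exists M, forall n, (M <= n)%N -> q ^+ n * K < e.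
Proof.
move=> q0 q1 e0.
have : (fun n => q ^+ n * K) @ \oo --> 0.
  by rewrite -(mul0r K); apply: cvgM; [apply: cvg_expr; rewrite ger0_norm | exact: cvg_cst].
move=> /cvgrPdist_lt/(_ e e0) [M _ HM]; exists M => n /HM.
by rewrite sub0r normrN; apply: le_lt_trans; exact: ler_norm.
Qed.

Section BisimulationMetric.
Variables (R : realType) (N : nat) (A : finType).
Variables (P P' : 'I_N -> A -> 'I_N -> R) (Rw Rw' : 'I_N -> A -> R) (gamma : R).
Hypotheses (gamma_ge0 : 0 <= gamma) (gamma_lt1 : gamma < 1).
Hypotheses (P_distr : forall i a, is_distr (P i a)).
Hypotheses (P'_distr : forall j a, is_distr (P' j a)).

Local Notation T := (bisim_step P P' Rw Rw' gamma).
Local Notation dn := (dseq P P' Rw Rw' gamma).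
Local Notation K := (Rmax Rw Rw' / (1 - gamma)).

Lemma Rmax_ge0 : 0 <= Rmax Rw Rw'.
Proof. exact: bigmax_ge_id. Qed.

Lemma Rmax_ub i j a : `|Rw i a - Rw' j a| <= Rmax Rw Rw'.
Proof.
apply: le_trans (le_bigmax _ _ i); apply: le_trans (le_bigmax _ _ j).
exact: le_bigmax (fun a => `|Rw i a - Rw' j a|) a.
Qed.

Lemma bisim_step_ge0 d i j : 0 <= T d i j.
Proof. exact: bigmax_ge_id. Qed.

Lemma bisim_step_le_shift {d d' e} : 0 <= e ->
  (forall i j, d i j <= d' i j + e) ->
  forall i j, T d i j <= T d' i j + gamma * e.
Proof.
move=> e0 dd' i j; apply: bigmax_le => [|a _].
  by rewrite addr_ge0 ?mulr_ge0 ?bisim_step_ge0.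
pose cost' a := `|Rw i a - Rw' j a| + gamma * W1 (P i a) (P' j a) d'.
apply: (@le_trans _ _ (cost' a + gamma * e)).
  by rewrite -addrA -mulrDr lerD2l ler_wpM2l // W1_le_shift.
by rewrite lerD2r; exact: le_bigmax cost' a.
Qed.

Lemma bisim_step_le d d' :
  (forall i j, d i j <= d' i j) -> forall i j, T d i j <= T d' i j.
Proof.
move=> dd' i j; rewrite -[leRHS]addr0 -(mulr0 gamma).
by apply: bisim_step_le_shift => // i' j'; rewrite addr0.
Qed.

Lemma bisim_step_le_cst {d c} : 0 <= c -> (forall i j, d i j <= c) ->
  forall i j, T d i j <= Rmax Rw Rw' + gamma * c.
Proof.
move=> c0 dc i j; apply: bigmax_le => [|a _].
  by rewrite addr_ge0 ?mulr_ge0 ?Rmax_ge0.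
by rewrite lerD ?Rmax_ub // ler_wpM2l // W1_le_cst.
Qed.

Lemma K_ge0 : 0 <= K.
Proof. by rewrite divr_ge0 ?Rmax_ge0 // subr_ge0 ltW. Qed.

Lemma dseq_le_K n i j : dn n i j <= K.
Proof.
elim: n i j => [|n IHn] i j; first exact: K_ge0.
apply: (le_trans (bisim_step_le_cst K_ge0 IHn i j)).
have gamma1 : 1 - gamma != 0 by rewrite subr_eq0 eq_sym lt_eqF.
suff -> : Rmax Rw Rw' + gamma * K = K by [].
by field.
Qed.

Lemma dseq_nondecreasing i j : {homo dn ^~ i ^~ j : m n / (m <= n)%N >-> m <= n}.
Proof.
apply: homo_leq => [x|y x z|n]; [exact: lexx | exact: le_trans |].
elim: n i j => [|n IHn] i j; first exact: bisim_step_ge0.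
exact: bisim_step_le.
Qed.

Lemma dseq_le_tail n k i j : dn (n + k) i j <= dn n i j + gamma ^+ n * K.
Proof.
elim: n i j => [|n IHn] i j; first by rewrite add0n expr0 mul1r add0r dseq_le_K.
rewrite addSn exprS -mulrA.
by apply: bisim_step_le_shift IHn i j; rewrite mulr_ge0 ?exprn_ge0 ?K_ge0.
Qed.

Lemma dseq_le m n i j : dn m i j <= dn n i j + gamma ^+ n * K.
Proof.
have [mn|nm] := leqP m n.
  apply: ler_wpDr; first by rewrite mulr_ge0 ?exprn_ge0 ?K_ge0.
  exact: dseq_nondecreasing.
by rewrite -(subnKC (ltnW nm)) dseq_le_tail.
Qed.

Definition dbar (i j : 'I_N) : R := sup (range (dn ^~ i ^~ j)).

Lemma dseq_le_dbar n i j : dn n i j <= dbar i j.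
Proof.
apply: sup_upper_bound; last by exists n.
split; first by exists (dn 0 i j), 0%N.
by exists (dn 0 i j + gamma ^+ 0 * K) => _ [m _ <-]; exact: dseq_le.
Qed.

Lemma dbar_le_dseq n i j : dbar i j <= dn n i j + gamma ^+ n * K.
Proof.
apply: ge_sup; first by exists (dn 0 i j), 0%N.
by move=> _ [m _ <-]; exact: dseq_le.
Qed.

Lemma dbar_fixed i j : dbar i j = T dbar i j.
Proof.
apply/eqP; rewrite eq_le; apply/andP; split.
  apply: ge_sup; first by exists (dn 0 i j), 0%N.
  move=> _ [[|n] _ <-]; first exact: bisim_step_ge0.
  by apply: bisim_step_le => i' j'; exact: dseq_le_dbar.
apply/ler_addgt0Pr => e e0.
have [M HM] := geometric_tail_lt K gamma_ge0 gamma_lt1 e0.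
have tail_ge0 : 0 <= gamma ^+ M * K by rewrite mulr_ge0 ?exprn_ge0 ?K_ge0.
apply: (le_trans (bisim_step_le_shift tail_ge0 (dbar_le_dseq M) i j)).
rewrite mulrA -exprS; apply: lerD; first exact: dseq_le_dbar M.+1 i j.
exact/ltW/HM.
Qed.

End BisimulationMetric.

Theorem theorem3 (R : realType) (N : nat) (A : finType)
  (P P' : 'I_N -> A -> 'I_N -> R) (Rw Rw' : 'I_N -> A -> R) (gamma : R) :
  0 < gamma < 1 ->
  (forall i a, is_distr (P i a)) ->
  (forall j a, is_distr (P' j a)) ->
  exists dbar : 'I_N -> 'I_N -> R,
    [/\ (* range [0, R_max/(1-gamma)] *)
        (forall i j, 0 <= dbar i j <= Rmax Rw Rw' / (1 - gamma)),
        (* uniform convergence d_n -> dbar *)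
        (forall e : R, 0 < e -> exists M : nat, forall n : nat, (M <= n)%N ->
            forall i j, `|dseq P P' Rw Rw' gamma n i j - dbar i j| < e),
        (* fixed point *)
        (forall i j, dbar i j = bisim_step P P' Rw Rw' gamma dbar i j) &
        (* error bound *)
        (forall (n : nat) i j,
            dbar i j - dseq P P' Rw Rw' gamma n i j
              <= gamma ^+ n * Rmax Rw Rw' / (1 - gamma))].
Proof.
move=> /andP[/ltW gamma_ge0 gamma_lt1] P_distr P'_distr.
have dbar_le n := dbar_le_dseq Rw Rw' gamma_ge0 gamma_lt1 P_distr P'_distr n.
have le_dbar n := dseq_le_dbar Rw Rw' gamma_ge0 gamma_lt1 P_distr P'_distr n.
exists (dbar P P' Rw Rw' gamma); split.
- move=> i j; rewrite (le_dbar 0%N i j) /=.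
  by have := dbar_le 0%N i j; rewrite expr0 mul1r add0r.
- move=> e e0.
  have [M HM] := geometric_tail_lt (Rmax Rw Rw' / (1 - gamma)) gamma_ge0 gamma_lt1 e0.
  exists M => n Mn i j; rewrite distrC ger0_norm ?subr_ge0 ?le_dbar //.
  by apply: le_lt_trans (HM n Mn); rewrite lerBlDl dbar_le.
- exact: dbar_fixed.
- by move=> n i j; rewrite lerBlDl -mulrA dbar_le.
Qed.
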